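(* The language $L_5\subseteq\{a,b\}^*$ does not belong to $Pol(\mathcal{C}om)(\{a,b\})$.
   Context: $L_5$ is the language recognized by the deterministic automaton with states $1,2,3,4,5$, initial state $1$, accepting set $\{5\}$, and transitions $\delta(1,a)=\delta(1,b)=2$, $\delta(2,a)=5$, $\delta(2,b)=3$, $\delta(3,a)=4$, $\delta(3,b)=5$, $\delta(4,a)=3$, $\delta(4,b)=1$, $\delta(5,a)=\delta(5,b)=5$. $\mathcal{C}om(\Sigma)$ is the set of regular languages over $\Sigma$ whose syntactic monoid ($\Sigma^*/\equiv_L$, where $x\equiv_L y$ iff $uxv\in L\Leftrightarrow uyv\in L$ for all $u,v$) is commutative; $Pol(\mathcal{C}om)(\Sigma)$ is the set of finite unions of languages $L_0a_1L_1\cdots a_kL_k$ with $k\ge0$, $a_i\in\Sigma$, $L_i\in\mathcal{C}om(\Sigma)$. *)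

From Stdlib Require Import List.
From mathcomp Require Import all_boot.
Set Implicit Arguments. Unset Strict Implicit. Unset Printing Implicit Defensive.

Inductive Sigma : Type := sa | sb.

Definition word := seq Sigma.
Definition lang := word -> Prop.

Definition regular (L : lang) : Prop :=
  exists (Q : finType) (q0 : Q) (d : Q -> Sigma -> Q) (F : pred Q),
    forall w : word, L w <-> F (foldl d q0 w).

Definition synt_equiv (L : lang) (x y : word) : Prop :=
  forall u v : word, L (u ++ x ++ v) <-> L (u ++ y ++ v).

Definition synt_commutative (L : lang) : Prop :=
  forall x y : word, synt_equiv L (x ++ y) (y ++ x).

Definition Com (L : lang) : Prop := regular L /\ synt_commutative L.

(* Membership in the marked product L0 a1 L1 ... ak Lk, where the list
   [(a1,L1);...;(ak,Lk)] is the tail. *)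
Fixpoint in_marked_prod (L0 : lang) (rest : seq (Sigma * lang)) (w : word) : Prop :=
  match rest with
  | [::] => L0 w
  | (a, L1) :: rest' =>
      exists u v : word, w = u ++ a :: v /\ L0 u /\ in_marked_prod L1 rest' v
  end.

Definition PolCom (L : lang) : Prop :=
  exists mons : seq (lang * seq (Sigma * lang)),
    (forall m, List.In m mons -> Com m.1 /\ forall p, List.In p m.2 -> Com p.2) /\
    forall w : word, L w <-> exists m, List.In m mons /\ in_marked_prod m.1 m.2 w.

Definition delta5 (q : nat) (c : Sigma) : nat :=
  match q, c with
  | 1, _ => 2
  | 2, sa => 5
  | 2, sb => 3
  | 3, sa => 4
  | 3, sb => 5
  | 4, sa => 3
  | 4, sb => 1
  | 5, _ => 5
  | q, _ => q (* unreachable states *)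
  end.

Definition L5 : lang := fun w => foldl delta5 1 w = 5.

From HB Require Import structures.
From mathcomp Require Import all_boot.

Set Implicit Arguments.
Unset Strict Implicit.
Unset Printing Implicit Defensive.

(* A syntactically commutative language is closed under
   permuting any infix of its words.  In a marked product
   L0 a1 L1 ... ak Lk whose factors are commutative, a word
   r u^n s with n > k splits so that at least one of the n copies of the
   block u lies entirely inside a single factor; permuting that copy into
   any rearrangement u' keeps the word in the product.  Hence every
   language of Pol(Com) has the following property: for n large enough,
   r u^n s in L implies r u^i u' u^j s in L for some i, j.
   L5 violates it: from state 1 the block abab is a loop and (abab)^n aa
   is accepted, whereas bbaa leads from 1 to state 3, on which abab is
   again a loop and aa never reaches 5. *)

(* Letters have decidable equality, so that perm_eq applies to words. *)
Definition Sigma_eqb (c d : Sigma) : bool :=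
  match c, d with sa, sa | sb, sb => true | _, _ => false end.
Lemma Sigma_eqP : Equality.axiom Sigma_eqb.
Proof. by case; case; constructor. Qed.
HB.instance Definition _ := hasDecEq.Build Sigma Sigma_eqP.

Definition wpow (u : word) (n : nat) : word := flatten (nseq n u).

Lemma wpowS (u : word) (n : nat) : wpow u n.+1 = u ++ wpow u n.
Proof. by []. Qed.

Lemma synt_comm_swap (L : lang) (r x y t : word) :
  synt_commutative L -> L (r ++ x ++ y ++ t) -> L (r ++ y ++ x ++ t).
Proof. by move=> HL; have := HL x y r t; rewrite -!catA => ->. Qed.

(* A commutative language is closed under permuting an infix: move the
   first letter of x to its place in y, then permute the rest. *)
Lemma synt_comm_perm (L : lang) (x : word) : forall (y r t : word),
  synt_commutative L -> perm_eq x y -> L (r ++ x ++ t) -> L (r ++ y ++ t).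
Proof.
elim: x => [|c x IH] y r t HL Pxy.
  by move: Pxy; rewrite perm_sym => /perm_nilP ->.
have cy : c \in y by rewrite -(perm_mem Pxy) mem_head.
move: Pxy; case/splitPr: cy => y1 y2.
rewrite perm_sym -[c :: y2]cat1s perm_catCA perm_cons perm_sym => Pxy12 Hx.
have Hy12 : L ((r ++ [:: c]) ++ (y1 ++ y2) ++ t).
  by apply: IH HL Pxy12 _; rewrite -catA.
have := @synt_comm_swap L r [:: c] y1 (y2 ++ t) HL.
by rewrite -!catA in Hy12 *; apply.
Qed.

Lemma split_marker (u v P Q : word) (a : Sigma) :
  u ++ a :: v = P ++ Q ->
  (exists u', u = P ++ u' /\ Q = u' ++ a :: v) \/
  (exists r', P = u ++ a :: r' /\ v = r' ++ Q).
Proof.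
elim: P u => [|p P IH] [|x u] //= E.
- by left; exists [::].
- by left; exists (x :: u).
- by case: E => -> ->; right; exists P.
case: E => <- /IH [[u' [-> ->]]|[r' [-> ->]]].
  by left; exists u'.
by right; exists r'.
Qed.

(* Block permutation in a marked product with k markers and commutative
   factors: among more than k consecutive copies of u, one lies inside a
   single factor and can be replaced by a permutation u'. *)
Lemma marked_prod_perm_block (u u' : word) (rest : seq (Sigma * lang)) :
  perm_eq u u' ->
  forall L0 : lang, synt_commutative L0 ->
  (forall p, List.In p rest -> synt_commutative p.2) ->
  forall (r s : word) (n : nat), size rest < n ->
  in_marked_prod L0 rest (r ++ wpow u n ++ s) ->
  exists i j, in_marked_prod L0 rest (r ++ wpow u i ++ u' ++ wpow u j ++ s).
Proof.
move=> Puu'; elim: rest => [|[a L1] rest IH] L0 HL0 Hrest r s [|n] //= Hn.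
  move=> Hw; exists 0, n; apply: (synt_comm_perm HL0 Puu').
  by rewrite (catA u) -wpowS.
move=> [x [v [E [Hx Hv]]]].
have E' : x ++ a :: v = (r ++ u) ++ (wpow u n ++ s) by rewrite -E wpowS !catA.
case: (split_marker E') => [[x' [Ex EQ]]|[r' [EP Ev]]].
  exists 0, n, (r ++ u' ++ x'), v; split; first by rewrite /= EQ -!catA.
  by split=> //; apply: (synt_comm_perm HL0 Puu'); rewrite catA -Ex.
have HL1 : synt_commutative L1 by apply: (Hrest (a, L1)); left.
have Hrest' p : List.In p rest -> synt_commutative p.2.
  by move=> Hp; apply: Hrest; right.
rewrite Ev in Hv.
have [i [j Hij]] := IH L1 HL1 Hrest' r' s n Hn Hv.
exists i.+1, j, x, (r' ++ wpow u i ++ u' ++ wpow u j ++ s); split => //.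
by rewrite wpowS -!catA catA EP -catA.
Qed.

Lemma size_le_sumn (mons : seq (lang * seq (Sigma * lang))) m :
  List.In m mons -> size m.2 <= sumn (map (fun m => size m.2) mons).
Proof.
elim: mons => [|x mons IH] //= [<-|/IH]; first exact: leq_addr.
by move/leq_trans; apply; apply: leq_addl.
Qed.

Lemma PolCom_perm_block (L : lang) : PolCom L ->
  exists N, forall (u u' r s : word) (n : nat), perm_eq u u' -> N < n ->
  L (r ++ wpow u n ++ s) -> exists i j, L (r ++ wpow u i ++ u' ++ wpow u j ++ s).
Proof.
move=> [mons [Hcom Hw]]; exists (sumn (map (fun m => size m.2) mons)).
move=> u u' r s n Puu' Hn /Hw [m [Hm Hin]].
have [[_ Hc0] Hcs] := Hcom m Hm.
have Hn' : size m.2 < n by apply: leq_ltn_trans Hn; apply: size_le_sumn.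
have [i [j Hij]] := marked_prod_perm_block Puu' Hc0
  (fun p Hp => proj2 (Hcs p Hp)) Hn' Hin.
by exists i, j; apply/Hw; exists m.
Qed.

Lemma delta5_abab_loop (q n : nat) : q = 1 \/ q = 3 ->
  foldl delta5 q (wpow [:: sa; sb; sa; sb] n) = q.
Proof. by case=> ->; elim: n. Qed.

(* (abab)^(N+1) aa is in L5, but no word (abab)^i bbaa (abab)^j aa is:
   its run goes 1 -> 1 -> 3 -> 3 -> 3. *)
Theorem mainTheorem16 : ~ PolCom L5.
Proof.
move=> /PolCom_perm_block [N HN].
set abab := [:: sa; sb; sa; sb].
have Hin : L5 (wpow abab N.+1 ++ [:: sa; sa]).
  by rewrite /L5 foldl_cat delta5_abab_loop //; left.
have [i [j]] := HN abab [:: sb; sb; sa; sa] [::] _ _ erefl (ltnSn N) Hin.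
rewrite /L5 cat0s !foldl_cat (@delta5_abab_loop 1 i); last by left.
by rewrite [foldl _ 1 _]/= delta5_abab_loop //; right.
Qed.
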